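(* Let $n$, $k$, $t$, $\ell$, $i$, $j$ be positive integers with $i\leq\min\{t,j\}$, $2t-i\leq k$, $t+j-i\leq\ell$ and $n\geq 2k$, and let $V$ be an $n$-dimensional vector space over $\mathbb{F}_q$. Suppose $\mathcal{F}\subseteq{V\brack k}$ is an almost $t$-intersecting family with $2t-i\leq\tau_t(\mathcal{F})\leq k$. If $X_1,X_2\in{V\brack \ell}$ with $\dim(X_1\cap X_2)=j$, then $$\frac{|\mathcal{F}(X_1,X_2;t,i)|}{q^{2(j-i)(t-i)}{j\brack i}{\ell-j\brack t-i}^{2}}\leq{k-t+1\brack 1}^{\tau_t(\mathcal{F})+i-2t}{n-\tau_t(\mathcal{F})\brack k-\tau_t(\mathcal{F})}+\sum_{m=0}^{\tau_t(\mathcal{F})+i-2t-1}{k-t+1\brack 1}^{m}.$$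
   Context: $q$ is a prime power; ${W\brack k}$ is the set of $k$-dimensional subspaces of $W$ and ${m\brack r}$ the Gaussian binomial coefficient $\prod_{s=0}^{r-1}\frac{q^{m-s}-1}{q^{r-s}-1}$ (equal to $1$ for $r=0$). A family $\mathcal{F}\subseteq{V\brack k}$ is almost $t$-intersecting if for each $F\in\mathcal{F}$ there is at most one $F'\in\mathcal{F}$ with $\dim(F\cap F')<t$. A subspace $W$ is a $t$-cover of $\mathcal{F}$ if $\dim(W\cap F)\geq t$ for all $F\in\mathcal{F}$; $\tau_t(\mathcal{F})$ is the minimum dimension of a $t$-cover. For subspaces $A,B$ of $V$, $\mathcal{F}(A,B;t,i)=\{F\in\mathcal{F}: \dim(F\cap A)\geq t,\ \dim(F\cap B)\geq t,\ \dim(F\cap A\cap B)=i\}$. *)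

From HB Require Import structures.
From mathcomp Require Import all_boot all_order all_algebra all_field.
From mathcomp Require Import finmap.
Set Implicit Arguments. Unset Strict Implicit. Unset Printing Implicit Defensive.
Import GRing.Theory Num.Theory.

Local Open Scope ring_scope.

(* Gaussian binomial [m r]_q = prod_{s<r} (q^(m-s)-1)/(q^(r-s)-1), as a rational;
   it equals 1 for r = 0 and 0 for r > m. *)
Definition gbin (q m r : nat) : rat :=
  \prod_(s < r) (((q ^ (m - s))%N%:R - 1) / ((q ^ (r - s))%N%:R - 1)).

Section Subspaces.
Variables (F : finFieldType) (vT : vectType F).
Local Open Scope fset_scope.

Definition k_family (k : nat) (Fam : {fset {vspace vT}}) : Prop :=
  forall A, A \in Fam -> \dim A = k.

Definition almost_t_intersecting (t : nat) (Fam : {fset {vspace vT}}) : Prop :=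
  forall A B C, A \in Fam -> B \in Fam -> C \in Fam ->
    (\dim (A :&: B)%VS < t)%N -> (\dim (A :&: C)%VS < t)%N -> B = C.

Definition t_cover (t : nat) (Fam : {fset {vspace vT}}) (W : {vspace vT}) : Prop :=
  forall A, A \in Fam -> (t <= \dim (W :&: A)%VS)%N.

Definition is_tau_t (t : nat) (Fam : {fset {vspace vT}}) (tau : nat) : Prop :=
  (exists W, t_cover t Fam W /\ \dim W = tau) /\
  (forall W, t_cover t Fam W -> (tau <= \dim W)%N).

Definition fam_AB (Fam : {fset {vspace vT}}) (A B : {vspace vT}) (t i : nat)
  : {fset {vspace vT}} :=
  [fset X in Fam | [&& (t <= \dim (X :&: A)%VS)%N, (t <= \dim (X :&: B)%VS)%N
                     & \dim (X :&: A :&: B)%VS == i]].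

End Subspaces.

From HB Require Import structures.
From mathcomp Require Import all_boot all_order all_algebra all_field.
From mathcomp Require Import finmap.
From mathcomp Require Import ring zify.
Import Order.TTheory GRing.Theory Num.Theory.

(* The r-subspaces A of U with A :&: J = I (for I <= J <= U) number at most
   q^((dim J - dim I)(r - dim I)) [dim U - dim J, r - dim I]: a basis of A over I is a
   sequence of U free over J, and it determines A.
   A member G of F(X1,X2;t,i) contains A1 + A2, where I := G :&: X1 :&: X2 and Ae <= G :&: Xe
   are t-spaces through I; then Ae :&: (X1 :&: X2) = I and dim (A1 + A2) = 2t - i, and there
   are at most [j, i] (q^((j-i)(t-i)) [l-j, t-i])^2 such triples (I, A1, A2).
   The members containing a subspace S with dim S < tau are counted by branching: S is not a
   t-cover, so some member F0 meets S in dimension < t; pick a (k-t+1)-space U <= F0 with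
   U :&: S = 0.  A member A containing S with dim (F0 :&: A) >= t meets U, since
   dim U + dim (F0 :&: A) > k = dim F0, hence contains S + L for a line L <= U; and at most one
   member A has dim (F0 :&: A) < t.  Each step raises dim S by one, until dim S = tau, where
   at most [n - tau, k - tau] members contain S. *)

(* The subType structure of {vspace vT} is only canonical inside VectorInternalTheory. *)
Import VectorInternalTheory.
HB.instance Definition _ (F : finFieldType) (vT : vectType F) :=
  [Finite of {vspace vT} by <:].

Section FiniteCounting.
Set Implicit Arguments. Unset Strict Implicit.

Lemma card_tuple_cons (T : finType) p (P : T -> seq T -> bool) :
  #|[set w : p.+1.-tuple T | P (thead w) (behead w)]| =
  \sum_x #|[set w : p.-tuple T | P x w]|.
Proof.
rewrite -sum1_card (reindex (fun xw : T * p.-tuple T => [tuple of xw.1 :: xw.2])) /=.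
  rewrite (eq_bigl (fun xw : T * p.-tuple T => P xw.1 xw.2)); last first.
    by move=> [x w]; rewrite inE theadE.
  rewrite -(pair_big_dep xpredT (fun x (w : p.-tuple T) => P x w) (fun _ _ => 1)) /=.
  by apply: eq_bigr => x _; rewrite -sum1_card; apply: eq_bigl => w; rewrite inE.
exists (fun w : p.+1.-tuple T => (thead w, [tuple of behead w])) => [[x w] | w] _ /=.
  by rewrite theadE; congr pair; apply: val_inj.
by rewrite [RHS]tuple_eta.
Qed.

Lemma cardfs_finset (K : finType) (A : {fset K}) : #|` A| = #|[set x in A]|.
Proof. by rewrite cardsE -(card_uniqP (fset_uniq A)); apply: eq_card. Qed.

Lemma card_bigcup_le (I T : finType) (P : pred I) (A : I -> {set T}) :
  #|\bigcup_(i | P i) A i| <= \sum_(i | P i) #|A i|.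
Proof.
elim/big_rec2: _ => [|i B n _ le_Bn]; first by rewrite cards0.
by rewrite (leq_trans (leq_card_setU _ _)) ?leq_add2l.
Qed.

Lemma sum_card_fibers_le (I J : finType) (P : pred I) (S : I -> {set J})
    (B : {set J}) (f : J -> I) :
  (forall i, P i -> {subset S i <= [pred j in B | f j == i]}) ->
  \sum_(i | P i) #|S i| <= #|B|.
Proof.
move=> sub_S; rewrite -sum1_card (partition_big f xpredT) //=.
apply: (@leq_trans (\sum_(i | P i) \sum_(j in B | f j == i) 1)).
  by apply: leq_sum => i Pi; rewrite sum1_card; apply/subset_leq_card/subsetP/sub_S.
by rewrite [X in _ <= X](bigID P) leq_addr.
Qed.

End FiniteCounting.

Section GaussianBinomial.
Set Implicit Arguments. Unset Strict Implicit.
Local Open Scope ring_scope.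
Variable q : nat.
Hypothesis q_gt1 : (1 < q)%N.

Lemma gbin_ge0 m r : 0 <= gbin q m r.
Proof.
apply: prodr_ge0 => s _; apply: divr_ge0; rewrite subr_ge0 ler1n expn_gt0 ltnW //.
Qed.

Lemma gbin_gt0 m r : (r <= m)%N -> 0 < gbin q m r.
Proof.
move=> le_rm; apply: prodr_gt0 => -[s /= lt_sr] _.
by apply: divr_gt0; rewrite subr_gt0 ltr1n -[X in (X < _)%N](expn0 q) ltn_exp2l //; lia.
Qed.

Lemma prod_expn_subn_gbin a b m p : (a <= b)%N -> (b + p <= m)%N ->
  (\prod_(s < p) (q ^ m - q ^ (b + s))%N)%:R =
  (q ^ ((b - a) * p))%N%:R * gbin q (m - b) p *
    (\prod_(s < p) (q ^ (a + p) - q ^ (a + s))%N)%:R :> rat.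
Proof.
move=> le_ab le_bpm.
have -> : (q ^ ((b - a) * p))%N = (\prod_(s < p) q ^ (b - a))%N.
  by rewrite prod_nat_const card_ord expnM.
rewrite !natr_prod -mulrA -!big_split /=; apply: eq_bigr => -[s /= lt_sp] _.
have [le_bs_m le_as_ap] : (b + s <= m)%N /\ (a + s <= a + p)%N by lia.
rewrite !natrB ?leq_pexp2l ?(ltnW q_gt1) //.
have -> : (q ^ m = q ^ (b - a) * q ^ (a + s) * q ^ (m - b - s))%N.
  by rewrite -!expnD; congr expn; lia.
have -> : (q ^ (b + s) = q ^ (b - a) * q ^ (a + s))%N.
  by rewrite -expnD; congr expn; lia.
rewrite [in X in _ = _ * X](_ : a + p = a + s + (p - s))%N; last by lia.
rewrite !expnD !natrM.
have qps_neq1 : (q ^ (p - s))%N%:R - 1 != 0 :> rat.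
  by rewrite subr_eq0 pnatr_eq1 -(expn0 q) eqn_exp2l //; lia.
by field.
Qed.

End GaussianBinomial.

Section BranchBound.
Local Open Scope ring_scope.
Variables (c G : rat).

Definition branch_bound d := c ^+ d * G + \sum_(m < d) c ^+ m.

Lemma branch_boundS d : branch_bound d.+1 = 1 + c * branch_bound d.
Proof.
rewrite /branch_bound big_ord_recl expr0 exprS mulrDr mulr_sumr -mulrA addrCA.
by congr (_ + (_ + _)); apply: eq_bigr => m _; rewrite exprS.
Qed.

Lemma branch_bound_ge0 d : 0 <= c -> 0 <= G -> 0 <= branch_bound d.
Proof.
move=> c_ge0 G_ge0; rewrite addr_ge0 ?mulr_ge0 ?exprn_ge0 //.
by rewrite sumr_ge0 // => m _; rewrite exprn_ge0.
Qed.

End BranchBound.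

Lemma ler_sum_card (R : numDomainType) (T : finType) (A : {pred T}) (f : T -> R) (a b : R) :
  (0 <= b)%R -> (#|A|%:R <= a)%R -> (forall x, x \in A -> f x <= b)%R ->
  (\sum_(x in A) f x <= a * b)%R.
Proof.
move=> b_ge0 le_A le_f; apply: le_trans (ler_sum _ le_f) _.
by rewrite sumr_const -mulr_natl ler_wpM2r.
Qed.

Section Subspaces.
Set Implicit Arguments. Unset Strict Implicit.
Variables (F : finFieldType) (vT : vectType F).
Local Notation T := (finvect_type vT).
Local Notation q := #|F|.
Implicit Types (U V W I J A : {vspace vT}) (x : vT) (s : seq vT).

(* card_vspace is stated for a vectType whose carrier is a finType, hence the case split. *)
Lemma card_mem_vspace V : #|[pred v : T | v \in V]| = q ^ \dim V.
Proof.
by move: V; case: vT => s c V; rewrite -(@card_vspace F (finvect_type (Vector.Pack c)) c V).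
Qed.

Lemma card_mem_vspaceD V W : (V <= W)%VS ->
  #|[pred v : T | (v \in W) && (v \notin V)]| = q ^ \dim W - q ^ \dim V.
Proof.
move=> sVW; rewrite -!card_mem_vspace -(cardID [pred v : T | v \in V] [pred v : T | v \in W]).
have -> : #|[predI [pred v : T | v \in W] & [pred v : T | v \in V]]| = #|[pred v : T | v \in V]|.
  by apply: eq_card => v; rewrite !inE andb_idl // => /(subvP sVW).
by rewrite addKn; apply: eq_card => v; rewrite !inE andbC.
Qed.

Lemma dim_add_line V x : \dim (V + <[x]>) = \dim V + (x \notin V).
Proof.
have [xV | xNV] /= := boolP (x \in V).
  by rewrite addn0 (addv_idPl _) // -memvE.
have x_neq0 : x != 0%R by apply: contraNneq xNV => ->; rewrite mem0v.
rewrite dimv_disjoint_sum ?dim_vline ?x_neq0 //; apply/vspaceP => y.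
rewrite memv_cap memv0; apply/andP/eqP => [[yV /vlineP[a ya]] | ->]; last by rewrite !mem0v.
have [a0 | a_neq0] := eqVneq a 0%R; first by rewrite ya a0 scale0r.
by move: xNV; rewrite -[x](scalerK a_neq0) -ya memvZ.
Qed.

Definition free_over V W s :=
  all (fun v => v \in W) s && (\dim (V + <<s>>) == \dim V + size s).

Lemma free_over_cons V W x s :
  free_over V W (x :: s) = [&& x \in W, x \notin V & free_over (V + <[x]>) W s].
Proof.
rewrite /free_over /= span_cons addvA -!andbA; case: (x \in W) => //=.
have le_dim : \dim (V + <[x]> + <<s>>) <= \dim (V + <[x]>) + size s.
  by apply: leq_trans (dimv_add_leqif _ _) _; rewrite leq_add2l dim_span.
move: le_dim; rewrite dim_add_line; case: (x \notin V); rewrite /= ?addn0 ?addn1 ?addnS //.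
by move=> le_dim; rewrite [_ == _]ltn_eqF ?andbF // ltnS.
Qed.

Lemma card_free_over p V W : (V <= W)%VS ->
  #|[set w : p.-tuple T | free_over V W w]| =
  \prod_(s < p) (q ^ \dim W - q ^ (\dim V + s)).
Proof.
elim: p V => [|p IHp] V sVW.
  rewrite big_ord0 -(expn0 #|T|) -(card_tuple 0 T); apply: eq_card => w.
  by rewrite !inE tuple0 /free_over /= span_nil addv0 addn0 eqxx.
rewrite big_ord_recl (eq_card (B := [set w : p.+1.-tuple T | free_over V W (thead w :: behead w)])).
  2: by move=> w; rewrite !inE; case/tupleP: w => x w; rewrite theadE.
rewrite (@card_tuple_cons T p (fun x s => free_over V W (x :: s))).
rewrite (eq_bigr (fun x : T => if (x \in W) && (x \notin V) then
    \prod_(s < p) (q ^ \dim W - q ^ (\dim V + bump 0 s)) else 0)); last first.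
  move=> x _; case: ifP => [/andP[xW xNV] | xWV].
    rewrite (eq_card (B := [set w : p.-tuple T | free_over (V + <[x : vT]>) W w])); last first.
      by move=> w; rewrite !inE free_over_cons xW xNV.
    rewrite IHp; last by rewrite subv_add sVW -memvE.
    by rewrite dim_add_line xNV addn1; apply: eq_bigr => s _; rewrite addSnnS.
  by apply: eq_card0 => w; rewrite !inE free_over_cons andbA xWV.
by rewrite -big_mkcond /= sum_nat_const card_mem_vspaceD // addn0 mulnC.
Qed.

Definition grass U r : {set {vspace vT}} := [set A | (A <= U)%VS && (\dim A == r)].

Definition grass_meet U J I r : {set {vspace vT}} :=
  [set A in grass U r | (A :&: J)%VS == I].

Lemma free_over_span I A s : (I <= A)%VS -> \dim A = \dim I + size s ->
  free_over I A s -> A = (I + <<s>>)%VS.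
Proof.
move=> sIA dimA /andP[/allP sA /eqP dimIs].
apply/eqP; rewrite eq_sym eqEdim dimIs dimA leqnn andbT subv_add sIA.
by apply/span_subvP => v /sA.
Qed.

Lemma free_over_meet I J U A s : (I <= J)%VS -> (A <= U)%VS -> (A :&: J)%VS = I ->
  A = (I + <<s>>)%VS -> \dim A = \dim I + size s -> free_over J U s.
Proof.
move=> sIJ sAU AJ defA dimA; apply/andP; split.
  apply/allP => v vs; apply: (subvP sAU); rewrite defA.
  exact: subvP (addvSr I _) v (memv_span vs).
have -> : (J + <<s>> = J + A)%VS by rewrite defA addvA (addv_idPl sIJ).
by apply/eqP; have := dimv_sum_cap J A; rewrite capvC AJ dimA; lia.
Qed.

Lemma card_grass_meet_mul_le U J I p : (I <= J)%VS -> (J <= U)%VS ->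
  #|grass_meet U J I (\dim I + p)| * \prod_(s < p) (q ^ (\dim I + p) - q ^ (\dim I + s))
  <= \prod_(s < p) (q ^ \dim U - q ^ (\dim J + s)).
Proof.
move=> sIJ sJU; rewrite -sum_nat_const -card_free_over //.
rewrite (eq_bigr (fun A => #|[set w : p.-tuple T | free_over I A w]|)); last first.
  move=> A; rewrite !inE => /andP[/andP[_ /eqP dimA] /eqP AJ].
  by rewrite card_free_over ?dimA // -AJ capvSl.
apply: (@sum_card_fibers_le _ _ _ _ _ (fun w : p.-tuple T => (I + <<(w : seq vT)>>)%VS)).
move=> A; rewrite !inE => /andP[/andP[sAU /eqP dimA] /eqP AJ] w; rewrite !inE => freeAw.
have dimAw : \dim A = \dim I + size w by rewrite size_tuple.
have sIA : (I <= A)%VS by rewrite -AJ capvSl.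
have defA := free_over_span sIA dimAw freeAw.
by rewrite -defA eqxx (free_over_meet sIJ sAU AJ defA dimAw).
Qed.

Lemma card_grass_meet_le U J I p : (I <= J)%VS -> (J <= U)%VS -> \dim J + p <= \dim U ->
  (#|grass_meet U J I (\dim I + p)%N|%:R
   <= (q ^ ((\dim J - \dim I) * p))%N%:R * gbin q (\dim U - \dim J)%N p :> rat)%R.
Proof.
move=> sIJ sJU le_dim; have q_gt1 := card_finNzRing_gt1 F.
have := card_grass_meet_mul_le p sIJ sJU.
rewrite -(ler_nat rat) natrM (prod_expn_subn_gbin q_gt1 (dimvS sIJ) le_dim) ler_pM2r //.
rewrite natr_prod; apply: prodr_gt0 => -[s /= lt_sp] _.
by rewrite ltr0n subn_gt0 ltn_exp2l // ltn_add2l.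
Qed.

Lemma card_grass_le U r : r <= \dim U -> (#|grass U r|%:R <= gbin q (\dim U) r :> rat)%R.
Proof.
move=> le_rU; have := @card_grass_meet_le U 0%VS 0%VS r (sub0v _) (sub0v _).
rewrite dimv0 add0n !subn0 mul0n expn0 mul1r => /(_ le_rU).
rewrite (_ : grass_meet U 0 0 r = grass U r) //.
by apply/setP => A; rewrite !inE capv0 eqxx andbT.
Qed.

Lemma exists_subspace_between I W d : (I <= W)%VS -> \dim I + d <= \dim W ->
  exists A, [/\ (I <= A)%VS, (A <= W)%VS & \dim A = \dim I + d].
Proof.
elim: d => [|d IHd] sIW le_dim; first by exists I; rewrite subvv addn0.
have [A [sIA sAW dimA]] : exists A, [/\ (I <= A)%VS, (A <= W)%VS & \dim A = \dim I + d].
  by apply: IHd sIW (leq_trans _ le_dim); rewrite leq_add2l.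
have /subvPn[v vW vNA] : ~~ (W <= A)%VS.
  by apply: contraTN le_dim => /dimvS; rewrite dimA addnS -ltnNge.
exists (A + <[v]>)%VS; split; first exact: subv_trans sIA (addvSl _ _).
  by rewrite subv_add sAW -memvE.
by rewrite dim_add_line vNA dimA addn1 addnS.
Qed.

Lemma exists_subspace_disjoint W S r : r + \dim (W :&: S) <= \dim W ->
  exists U, [/\ (U <= W)%VS, \dim U = r & (U :&: S = 0)%VS].
Proof.
move=> le_dim; have le_dim' : \dim (0%VS : {vspace vT}) + r <= \dim (W :\: S).
  by rewrite dimv0 add0n; have := dimv_cap_compl W S; lia.
have [U [_ sUWS dimU]] := exists_subspace_between (sub0v _) le_dim'.
exists U; split; first exact: subv_trans sUWS (diffvSl _ _).
  by rewrite dimU dimv0.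
by apply/eqP; rewrite -subv0 -(capv_diff W S) capvS.
Qed.

Lemma dim_add_grass_meet X1 X2 I A1 A2 t :
  A1 \in grass_meet X1 (X1 :&: X2) I t -> A2 \in grass_meet X2 (X1 :&: X2) I t ->
  \dim (A1 + A2) + \dim I = 2 * t.
Proof.
rewrite !inE => /andP[/andP[sA1 /eqP dimA1] /eqP meetA1] /andP[/andP[sA2 /eqP dimA2] /eqP meetA2].
suff <- : (A1 :&: A2)%VS = I by rewrite dimv_sum_cap dimA1 dimA2 addnn mul2n.
apply/eqP; rewrite eqEsubv; apply/andP; split.
  rewrite -meetA1 !subv_cap capvSl (subv_trans (capvSl _ _) sA1).
  exact: subv_trans (capvSr _ _) sA2.
by rewrite subv_cap -{1}meetA1 -meetA2 !capvSl.
Qed.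

End Subspaces.

Section AlmostIntersectingFamily.
Set Implicit Arguments. Unset Strict Implicit.
Variables (F : finFieldType) (vT : vectType F).
Variables (Fam : {fset {vspace vT}}) (k t : nat).
Hypothesis Fam_k : k_family k Fam.
Local Notation q := #|F|.
Implicit Types (S U W A : {vspace vT}).

Definition fam_containing S : {set {vspace vT}} := [set A | (A \in Fam) && (S <= A)%VS].

Lemma card_fam_containing_le S : \dim S <= k -> k <= \dim (fullv : {vspace vT}) ->
  (#|fam_containing S|%:R <= gbin q (\dim (fullv : {vspace vT}) - \dim S) (k - \dim S) :> rat)%R.
Proof.
move=> le_Sk le_kn.
have := @card_grass_meet_le _ _ fullv S S (k - \dim S) (subvv S) (subvf S).
rewrite subnn mul0n expn0 mul1r subnKC // => /(_ le_kn); apply: le_trans.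
rewrite ler_nat; apply/subset_leq_card/subsetP => A; rewrite !inE => /andP[AFam sSA].
by rewrite subvf Fam_k // eqxx; apply/eqP/capv_idPr.
Qed.

Lemma fam_containing_sub_branch F0 U S : (U <= F0)%VS -> \dim F0 = k -> \dim U = k - t + 1 ->
  fam_containing S \subset [set A | (A \in Fam) && (\dim (F0 :&: A) < t)]
                    :|: \bigcup_(L in grass U 1) fam_containing (S + L).
Proof.
move=> sUF0 dimF0 dimU; apply/subsetP => A; rewrite !inE => /andP[AFam sSA].
rewrite AFam /=; case: ltnP => //= le_tA; apply/bigcupP.
have dimUA : 0 < \dim (U :&: A).
  have := dimv_sum_cap U (F0 :&: A).
  have : \dim (U + F0 :&: A) <= k by rewrite -dimF0 dimvS // subv_add sUF0 capvSl.
  have : \dim (U :&: (F0 :&: A)) <= \dim (U :&: A) by rewrite dimvS // capvS // capvSr.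
  have : \dim (F0 :&: A) <= k by rewrite -dimF0 dimvS // capvSl.
  lia.
have u_neq0 : vpick (U :&: A) != 0%R.
  by rewrite vpick0; apply: contraTneq dimUA => ->; rewrite dimv0.
have /[!memv_cap] /andP[uU uA] := memv_pick (U :&: A).
exists <[vpick (U :&: A)]>%VS; first by rewrite inE -memvE uU dim_vline u_neq0.
by rewrite inE AFam subv_add sSA -memvE.
Qed.

Hypothesis Fam_t : almost_t_intersecting t Fam.

Lemma card_far_le1 F0 : F0 \in Fam ->
  #|[set A | (A \in Fam) && (\dim (F0 :&: A) < t)]| <= 1.
Proof.
move=> F0Fam; apply/card_le1_eqP => A B; rewrite !inE => /andP[AFam ltA] /andP[BFam ltB].
exact: Fam_t F0Fam BFam AFam ltB ltA.
Qed.

Variable tau : nat.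
Hypothesis tau_min : forall W, t_cover t Fam W -> tau <= \dim W.

Lemma exists_far_member S : \dim S < tau -> exists2 F0, F0 \in Fam & \dim (S :&: F0) < t.
Proof.
move=> lt_S_tau.
have [/hasP[F0 F0Fam ltF0] | /hasPn farN] := boolP (has (fun A => \dim (S :&: A) < t) Fam).
  by exists F0.
by move: lt_S_tau; rewrite ltnNge tau_min // => A /farN; rewrite -leqNgt.
Qed.

Lemma card_fam_containing_branch (G : rat) : 0 < t <= k -> (0 <= G)%R ->
    (forall S, \dim S = tau -> (#|fam_containing S|%:R <= G)%R) ->
  forall d S, \dim S + d = tau ->
  (#|fam_containing S|%:R <= branch_bound (gbin q (k - t + 1) 1) G d)%R.
Proof.
move=> /andP[t_gt0 le_tk] G_ge0 base; set c := gbin _ _ _.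
elim=> [|d IHd] S dimS.
  by rewrite /branch_bound expr0 mul1r big_ord0 addr0 base // -dimS addn0.
have [F0 F0Fam ltF0] : exists2 F0, F0 \in Fam & \dim (S :&: F0) < t.
  by apply: exists_far_member; lia.
have [U [sUF0 dimU US]] : exists U, [/\ (U <= F0)%VS, \dim U = k - t + 1 & (U :&: S = 0)%VS].
  by apply: exists_subspace_disjoint; rewrite capvC (Fam_k F0Fam); lia.
have card_lines : (#|grass U 1|%:R <= c)%R by rewrite /c -dimU card_grass_le ?dimU ?addn1.
have card_le : #|fam_containing S| <= 1 + \sum_(L in grass U 1) #|fam_containing (S + L)|.
  apply: leq_trans (subset_leq_card (fam_containing_sub_branch S sUF0 (Fam_k F0Fam) dimU)) _.
  apply: leq_trans (leq_card_setU _ _) _.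
  exact: leq_add (card_far_le1 F0Fam) (card_bigcup_le _ _).
rewrite -(ler_nat rat) natrD natr_sum in card_le; apply: le_trans card_le _.
rewrite branch_boundS lerD2l; apply: ler_sum_card => // [|L].
  by rewrite branch_bound_ge0 // (gbin_ge0 (card_finNzRing_gt1 F)).
rewrite inE => /andP[sLU /eqP dimL]; apply: IHd.
rewrite dimv_disjoint_sum ?dimL; first by lia.
by apply/eqP; rewrite -subv0 -US capvC capvS.
Qed.

Lemma fam_AB_sub_bigcup X1 X2 i : i <= t ->
  [set A in fam_AB Fam X1 X2 t i] \subset
  \bigcup_(I in grass (X1 :&: X2) i) \bigcup_(A1 in grass_meet X1 (X1 :&: X2) I t)
    \bigcup_(A2 in grass_meet X2 (X1 :&: X2) I t) fam_containing (A1 + A2).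
Proof.
move=> le_it; apply/subsetP => G; rewrite !inE => /andP[GFam /and3P[le_tX1 le_tX2 /eqP dimI]].
rewrite -capvA in dimI; set J := (X1 :&: X2)%VS in dimI *; set I := (G :&: J)%VS in dimI *.
have meetJ A : (I <= A)%VS -> (A <= G)%VS -> (A :&: J)%VS = I.
  move=> sIA sAG; apply/eqP; rewrite eqEsubv subv_cap sIA capvSr andbT.
  by rewrite capvS.
have [A1 [sIA1 sA1 dimA1]] :
    exists A1, [/\ (I <= A1)%VS, (A1 <= G :&: X1)%VS & \dim A1 = \dim I + (t - i)].
  by apply: exists_subspace_between; rewrite ?dimI ?subnKC // /I /J capvA capvSl.
have [A2 [sIA2 sA2 dimA2]] :
    exists A2, [/\ (I <= A2)%VS, (A2 <= G :&: X2)%VS & \dim A2 = \dim I + (t - i)].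
  apply: exists_subspace_between; rewrite ?dimI ?subnKC //.
  by rewrite subv_cap capvSl (subv_trans (capvSr _ _) (capvSr _ _)).
rewrite dimI subnKC // in dimA1 dimA2.
apply/bigcupP; exists I; first by rewrite inE capvSr dimI eqxx.
apply/bigcupP; exists A1.
  by rewrite !inE (subv_trans sA1 (capvSr _ _)) dimA1 meetJ ?eqxx // (subv_trans sA1 (capvSl _ _)).
apply/bigcupP; exists A2.
  by rewrite !inE (subv_trans sA2 (capvSr _ _)) dimA2 meetJ ?eqxx // (subv_trans sA2 (capvSl _ _)).
by rewrite inE GFam subv_add (subv_trans sA1 (capvSl _ _)) (subv_trans sA2 (capvSl _ _)).
Qed.

Lemma card_fam_AB_le X1 X2 (l j i : nat) (B : rat) :
    \dim X1 = l -> \dim X2 = l -> \dim (X1 :&: X2) = j -> i <= minn t j -> t + j - i <= l ->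
    (0 <= B)%R -> (forall S, \dim S = 2 * t - i -> (#|fam_containing S|%:R <= B)%R) ->
  (#|` fam_AB Fam X1 X2 t i|%:R
    <= gbin q j i * ((q ^ ((j - i) * (t - i)))%N%:R * gbin q (l - j) (t - i)) ^+ 2 * B)%R.
Proof.
move=> dimX1 dimX2 dimJ /[!leq_min] /andP[le_it le_ij] le_tjl B_ge0 card_sup.
have q_gt1 := card_finNzRing_gt1 F.
set J := (X1 :&: X2)%VS in dimJ *; set c1 := ((q ^ _)%N%:R * _)%R.
have c1_ge0 : (0 <= c1)%R by rewrite mulr_ge0 ?ler0n ?(gbin_ge0 q_gt1).
have card_meet X I : \dim X = l -> (J <= X)%VS -> I \in grass J i ->
    (#|grass_meet X J I t|%:R <= c1)%R.
  move=> dimX sJX; rewrite inE => /andP[sIJ /eqP dimI].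
  have := @card_grass_meet_le _ _ X J I (t - i) sIJ sJX.
  by rewrite dimX dimJ dimI subnKC //; apply; lia.
have le_card : #|` fam_AB Fam X1 X2 t i| <= \sum_(I in grass J i)
    \sum_(A1 in grass_meet X1 J I t) \sum_(A2 in grass_meet X2 J I t) #|fam_containing (A1 + A2)|.
  rewrite cardfs_finset; apply: leq_trans (subset_leq_card (fam_AB_sub_bigcup X1 X2 le_it)) _.
  apply: leq_trans (card_bigcup_le _ _) _; apply: leq_sum => I _.
  apply: leq_trans (card_bigcup_le _ _) _; apply: leq_sum => A1 _.
  exact: card_bigcup_le.
rewrite -(ler_nat rat) natr_sum in le_card; apply: le_trans le_card _.
rewrite -mulrA; apply: ler_sum_card => [||I gI]; first by rewrite mulr_ge0 ?exprn_ge0.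
  by rewrite -dimJ card_grass_le ?dimJ.
rewrite natr_sum expr2 -mulrA; apply: ler_sum_card => [||A1 gA1]; first by rewrite mulr_ge0.
  by rewrite card_meet ?capvSl.
rewrite natr_sum; apply: ler_sum_card => [||A2 gA2] //; first by rewrite card_meet ?capvSr.
apply: card_sup; have := dim_add_grass_meet gA1 gA2.
by move: gI; rewrite inE => /andP[_ /eqP ->]; lia.
Qed.

End AlmostIntersectingFamily.

Theorem lemma6p1 (F : finFieldType) (vT : vectType F) (q n k t l i j : nat)
  (Fam : {fset {vspace vT}}) (tau : nat) (X1 X2 : {vspace vT}) :
  #|F| = q ->
  \dim (fullv : {vspace vT}) = n ->
  (0 < n)%N -> (0 < k)%N -> (0 < t)%N -> (0 < l)%N -> (0 < i)%N -> (0 < j)%N ->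
  (i <= minn t j)%N -> (2 * t - i <= k)%N -> (t + j - i <= l)%N -> (2 * k <= n)%N ->
  k_family k Fam ->
  almost_t_intersecting t Fam ->
  is_tau_t t Fam tau ->
  (2 * t - i <= tau)%N -> (tau <= k)%N ->
  \dim X1 = l -> \dim X2 = l -> \dim (X1 :&: X2)%VS = j ->
  ((#|` fam_AB Fam X1 X2 t i|)%:R
     / ((q ^ (2 * (j - i) * (t - i)))%N%:R * gbin q j i * (gbin q (l - j) (t - i)) ^+ 2)
   <= (gbin q (k - t + 1) 1) ^+ (tau + i - 2 * t) * gbin q (n - tau) (k - tau)
      + \sum_(m < tau + i - 2 * t) (gbin q (k - t + 1) 1) ^+ m :> rat)%R.
Proof.
move=> <- dim_n _ _ t_gt0 _ _ _ le_i_tj le_2ti_k le_tji_l le_2k_n Fam_k Fam_t [_ tau_min]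
  le_2ti_tau le_tau_k dimX1 dimX2 dimJ.
have q_gt1 := card_finNzRing_gt1 F.
have [le_it le_ij] : (i <= t)%N /\ (i <= j)%N by move: le_i_tj; rewrite leq_min => /andP.
set G := gbin _ (n - tau) (k - tau).
rewrite -[X in (_ <= X)%R]/(branch_bound (gbin #|F| (k - t + 1) 1) G (tau + i - 2 * t)).
set B := branch_bound _ _ _.
have G_ge0 : (0 <= G)%R by apply: gbin_ge0.
have card_sup_tau S : \dim S = tau -> (#|fam_containing Fam S|%:R <= G :> rat)%R.
  by move=> dimS; rewrite /G -dim_n -dimS card_fam_containing_le // ?dimS ?dim_n //; lia.
have card_sup S : \dim S = (2 * t - i)%N -> (#|fam_containing Fam S|%:R <= B :> rat)%R.
  move=> dimS; apply: (card_fam_containing_branch Fam_k Fam_t tau_min _ G_ge0 card_sup_tau).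
    by lia.
  by rewrite dimS; lia.
set c1 := ((#|F| ^ ((j - i) * (t - i)))%N%:R * gbin #|F| (l - j) (t - i))%R.
have -> : ((#|F| ^ (2 * (j - i) * (t - i)))%N%:R * gbin #|F| j i
           * gbin #|F| (l - j) (t - i) ^+ 2 = gbin #|F| j i * c1 ^+ 2 :> rat)%R.
  by rewrite (_ : 2 * _ * _ = (j - i) * (t - i) * 2)%N 1?expnM 1?natrX /c1; [ring | lia].
have c1_gt0 : (0 < c1)%R.
  by rewrite mulr_gt0 ?ltr0n ?expn_gt0 ?(ltnW q_gt1) ?gbin_gt0 //; lia.
rewrite ler_pdivrMr; last by rewrite mulr_gt0 ?exprn_gt0 ?gbin_gt0.
rewrite mulrC; apply: card_fam_AB_le dimX1 dimX2 dimJ le_i_tj le_tji_l _ card_sup.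
by rewrite branch_bound_ge0 // gbin_ge0.
Qed.
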